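(* Let $\phi:\mathbb{R}^m\to\mathbb{R}$ be a sublinear function, $\lambda\in\mathbb{R}^n$ with $\|\lambda\|=1$, and $C=\{(x,y)\in\mathbb{R}^{n+m}:\phi(y)\le\lambda^\mathsf{T} x\}$. Let $(\bar x,\bar y)\in C$ be such that $\phi$ is differentiable at $\bar y$ and $\phi(\bar y)=\lambda^\mathsf{T}\bar x$. Then $(\bar x,\bar y)$ exposes the valid inequality $-\lambda^\mathsf{T} x+\nabla\phi(\bar y)^\mathsf{T} y\le0$ with respect to $C$.
   Context: A function is sublinear if it is convex and positively homogeneous. An inequality $\alpha^\mathsf{T} z\le\beta$ (written $(\alpha,\beta)$) is valid for $C$ if it holds on $C$; it is non-trivial if $\alpha\neq0$. A point $z_0$ exposes a valid inequality $(\alpha,\beta)$ with respect to a convex set $C$ if $\alpha^\mathsf{T} z_0=\beta$ and for every non-trivial valid inequality $\gamma^\mathsf{T} z\le\delta$ for $C$ with $\gamma^\mathsf{T} z_0=\delta$ there is $\mu>0$ with $\gamma=\mu\alpha$ and $\delta=\mu\beta$. *)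

From HB Require Import structures.
From mathcomp Require Import all_boot all_order all_algebra.
From mathcomp Require Import all_classical all_reals all_analysis.
Set Implicit Arguments. Unset Strict Implicit. Unset Printing Implicit Defensive.
Import Order.TTheory GRing.Theory Num.Theory.
Import numFieldNormedType.Exports.
Local Open Scope classical_set_scope.
Local Open Scope ring_scope.

Definition dotv (R : realType) (k : nat) (u v : 'rV[R]_k) : R :=
  \sum_(i < k) u 0 i * v 0 i.

Definition enorm (R : realType) (k : nat) (u : 'rV[R]_k) : R :=
  Num.sqrt (dotv u u).

Definition convex_fun (R : realType) (k : nat) (f : 'rV[R]_k -> R) : Prop :=
  forall (y1 y2 : 'rV[R]_k) (t : R), 0 <= t -> t <= 1 ->
    f (t *: y1 + (1 - t) *: y2) <= t * f y1 + (1 - t) * f y2.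

Definition pos_homogeneous (R : realType) (k : nat) (f : 'rV[R]_k -> R) : Prop :=
  forall (t : R) (y : 'rV[R]_k), 0 < t -> f (t *: y) = t * f y.

Definition sublinear (R : realType) (k : nat) (f : 'rV[R]_k -> R) : Prop :=
  convex_fun f /\ pos_homogeneous f.

(* Points of R^{n+m} are pairs (x, y) with x in R^n, y in R^m; an inequality
   alpha^T z <= beta has alpha = (ax, ay) in R^n x R^m. *)
Definition pdot (R : realType) (n m : nat)
  (a z : 'rV[R]_n * 'rV[R]_m) : R := dotv a.1 z.1 + dotv a.2 z.2.

Definition valid_ineq (R : realType) (n m : nat)
  (C : set ('rV[R]_n * 'rV[R]_m)) (a : 'rV[R]_n * 'rV[R]_m) (b : R) : Prop :=
  forall z, C z -> pdot a z <= b.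

Definition nontrivial (R : realType) (n m : nat) (a : 'rV[R]_n * 'rV[R]_m) : Prop :=
  a <> (0, 0).

Definition exposes (R : realType) (n m : nat)
  (C : set ('rV[R]_n * 'rV[R]_m)) (z0 : 'rV[R]_n * 'rV[R]_m)
  (a : 'rV[R]_n * 'rV[R]_m) (b : R) : Prop :=
  pdot a z0 = b /\
  forall (g : 'rV[R]_n * 'rV[R]_m) (d : R),
    nontrivial g -> valid_ineq C g d -> pdot g z0 = d ->
    exists mu : R, 0 < mu /\ g = (mu *: a.1, mu *: a.2) /\ d = mu * b.

Definition grad (R : realType) (k : nat) (f : 'rV[R]_k -> R) (y : 'rV[R]_k)
  : 'rV[R]_k := \row_(j < k) ('d f y (delta_mx 0 j : 'rV[R]_k)).

From HB Require Import structures.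
From mathcomp Require Import all_boot all_order all_algebra.
From mathcomp Require Import all_classical all_reals all_analysis.
From mathcomp Require Import lra.
Set Implicit Arguments. Unset Strict Implicit. Unset Printing Implicit Defensive.
Import Order.TTheory GRing.Theory Num.Theory.
Import numFieldNormedType.Exports.
Local Open Scope classical_set_scope.
Local Open Scope ring_scope.

(* Let (ga, gb) . z <= d be valid for the cone C and tight at (xb, yb).
   Since C is a cone, d = 0.  Testing the inequality on the points (x, 0)
   with lam . x >= 0 forces ga = c lam with c <= 0, and testing it on
   (phi y lam, y) gives gb . y <= -c phi y, with equality at yb by tightness.
   If c = 0 then gb = 0 and the inequality is trivial; otherwise gb / (-c)
   is a subgradient of phi at yb, hence equals the gradient because phi is
   differentiable there.  Euler's identity grad phi yb . yb = phi yb shows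
   that the inequality with normal (-lam, grad phi yb) is tight too. *)

Lemma derive_touching_line (R : realType) (V : normedModType R) (f : V -> R)
    (a v : V) (c : R) :
  derivable f a v -> (\forall h \near 0, f a + h * c <= f (h *: v + a)) ->
  'D_v f a = c.
Proof.
move=> df touch; set q := fun h : R => h^-1 *: (f (h *: v + a) - f a).
have q_ge h : 0 < h -> f a + h * c <= f (h *: v + a) -> c <= q h.
  by move=> h0 le; rewrite /q -[c](mulKf (lt0r_neq0 h0)) ler_pM2l ?invr_gt0 // lerBrDl.
have q_le h : h < 0 -> f a + h * c <= f (h *: v + a) -> q h <= c.
  by move=> h0 le; rewrite /q -[c](mulKf (ltr0_neq0 h0)) ler_nM2l ?invr_lt0 // lerBrDl.
have q_cvg (F : set_system R) : Filter F -> F --> (0 : R)^' -> cvg (q @ F).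
  have dq : cvg (q @ (0 : R)^') := df.
  move=> FF sF; apply/cvg_ex; exists (lim (q @ (0 : R)^')).
  exact: cvg_trans (cvg_app q sF) dq.
apply/eqP; rewrite eq_le; apply/andP; split.
- rewrite /derive (cvg_at_leftE _ _ df); apply: limr_le.
    by apply: q_cvg => A [e e0 Ae]; exists e => // h he /lt_eqF/negbT; exact: Ae.
  near=> h; apply: q_le; near: h; first exact: nbhs_left_lt.
  exact: cvg_within _ touch.
- rewrite /derive (cvg_at_rightE _ _ df); apply: limr_ge.
    by apply: q_cvg => A [e e0 Ae]; exists e => // h he /gt_eqF/negbT; exact: Ae.
  near=> h; apply: q_ge; near: h; first exact: nbhs_right_gt.
  exact: cvg_within _ touch.
Unshelve. all: by end_near. Qed.

Section Dotv.
Variables (R : realType) (k : nat).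
Implicit Types (u v w : 'rV[R]_k).

Lemma dotvC u v : dotv u v = dotv v u.
Proof. by apply: eq_bigr => i _; rewrite mulrC. Qed.

Lemma dotvDr u v w : dotv u (v + w) = dotv u v + dotv u w.
Proof. by rewrite /dotv -big_split; apply: eq_bigr => i _; rewrite mxE mulrDr. Qed.

Lemma dotvZr u (c : R) v : dotv u (c *: v) = c * dotv u v.
Proof. by rewrite /dotv mulr_sumr; apply: eq_bigr => i _; rewrite mxE mulrCA. Qed.

Lemma dotvNr u v : dotv u (- v) = - dotv u v.
Proof. by rewrite -scaleN1r dotvZr mulN1r. Qed.

Lemma dotvBr u v w : dotv u (v - w) = dotv u v - dotv u w.
Proof. by rewrite dotvDr dotvNr. Qed.

Lemma dotv0r u : dotv u 0 = 0.
Proof. by rewrite -(scale0r 0) dotvZr mul0r. Qed.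

Lemma dotvDl u v w : dotv (v + w) u = dotv v u + dotv w u.
Proof. by rewrite dotvC dotvDr !(dotvC u). Qed.

Lemma dotvZl u (c : R) v : dotv (c *: v) u = c * dotv v u.
Proof. by rewrite dotvC dotvZr dotvC. Qed.

Lemma dotvNl u v : dotv (- v) u = - dotv v u.
Proof. by rewrite dotvC dotvNr dotvC. Qed.

Lemma dotv_delta u (j : 'I_k) : dotv u (delta_mx 0 j) = u 0 j.
Proof.
rewrite /dotv (bigD1 j) //= mxE !eqxx mulr1 big1 ?addr0 // => i /negbTE ne.
by rewrite mxE ne andbF mulr0.
Qed.

Lemma dotvv_ge0 u : 0 <= dotv u u.
Proof. by apply: sumr_ge0 => i _; rewrite -expr2 sqr_ge0. Qed.

Lemma dotvv_le0 u : dotv u u <= 0 -> u = 0.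
Proof.
move=> le0; have /psumr_eq0P uu0 : dotv u u = 0.
  by apply/eqP; rewrite eq_le le0 dotvv_ge0.
apply/rowP => j; rewrite mxE; apply/eqP; rewrite -sqrf_eq0 expr2 uu0 //.
by move=> i _; rewrite -expr2 sqr_ge0.
Qed.

Lemma enorm1_dotvv u : enorm u = 1 -> dotv u u = 1.
Proof.
by rewrite /enorm -{1}sqrtr1 => /eqP; rewrite eqr_sqrt ?dotvv_ge0 // => /eqP.
Qed.

End Dotv.

Section Gradient.
Variables (R : realType) (k : nat).
Implicit Types (f : 'rV[R]_k -> R) (a s y : 'rV[R]_k).

Lemma dotv_grad f y (v : 'rV[R]_k) : dotv (grad f y) v = 'd f y v.
Proof.
rewrite /grad /dotv {2}(row_sum_delta v) linear_sum; apply: eq_bigr => j _.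
by rewrite mxE linearZ /= mulrC.
Qed.

Definition subgradient f a s :=
  forall y, f a + dotv s (y - a) <= f y.

Lemma grad_subgradient f a s :
  differentiable f a -> subgradient f a s -> grad f a = s.
Proof.
move=> df sub; apply/rowP => j; rewrite /grad mxE -deriveE //.
apply: derive_touching_line; first exact: diff_derivable.
apply: filterE => h; have := sub (h *: delta_mx 0 j + a).
by rewrite addrK dotvZr dotv_delta mulrC.
Qed.

Lemma scaled_minorant_subgradient f a (g : 'rV[R]_k) (mu : R) :
  0 < mu -> (forall y, dotv g y <= mu * f y) -> dotv g a = mu * f a ->
  subgradient f a (mu^-1 *: g).
Proof.
move=> mu0 minor ga y; rewrite dotvZl dotvBr ga mulrBr mulKf ?lt0r_neq0 //.
by rewrite addrCA subrr addr0 ler_pdivrMl.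
Qed.

Lemma pos_homogeneous0 f : pos_homogeneous f -> f 0 = 0.
Proof. by move=> hom; have := hom 2 0 (ltr0Sn _ 1); rewrite scaler0 => h; lra. Qed.

Lemma pos_homogeneous_euler f y :
  pos_homogeneous f -> differentiable f y -> dotv (grad f y) y = f y.
Proof.
move=> hom df; rewrite dotv_grad -deriveE //.
apply: derive_touching_line; first exact: diff_derivable.
near=> h; have -> : h *: y + y = (h + 1) *: y by rewrite scalerDl scale1r.
rewrite hom; first by rewrite mulrDl mul1r addrC.
rewrite -ltrBlDr sub0r; near: h.
by apply: (@cvgr_gt _ _ _ _ idfun 0 (@cvg_id _ _)); rewrite ltrN10.
Unshelve. all: by end_near. Qed.

End Gradient.

Section Cones.
Variables (R : realType) (n m : nat).
Implicit Types (C : set ('rV[R]_n * 'rV[R]_m)) (g z : 'rV[R]_n * 'rV[R]_m).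

Definition is_cone C :=
  C (0, 0) /\ forall t z, 0 < t -> C z -> C (t *: z.1, t *: z.2).

Lemma pdotZr g (t : R) z : pdot g (t *: z.1, t *: z.2) = t * pdot g z.
Proof. by rewrite /pdot /= !dotvZr mulrDr. Qed.

Lemma valid_cone_tight_rhs0 C g d z :
  is_cone C -> valid_ineq C g d -> C z -> pdot g z = d -> d = 0.
Proof.
move=> [C0 CZ] val Cz gz.
have := val _ C0; rewrite /pdot /= !dotv0r addr0 => d_ge0.
have := val _ (CZ 2 z (ltr0Sn _ 1) Cz); rewrite pdotZr gz => d2_le; lra.
Qed.

Definition epi_cone (phi : 'rV[R]_m -> R) (lam : 'rV[R]_n) :=
  [set z : 'rV[R]_n * 'rV[R]_m | phi z.2 <= dotv lam z.1].

Lemma epi_cone_is_cone phi lam : pos_homogeneous phi -> is_cone (epi_cone phi lam).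
Proof.
move=> hom; split; first by rewrite /epi_cone /= pos_homogeneous0 // dotv0r.
by move=> t [x y] t0; rewrite /epi_cone /= hom // dotvZr ler_pM2l.
Qed.

Section ValidForEpiCone.
Variables (phi : 'rV[R]_m -> R) (lam : 'rV[R]_n).
Hypotheses (phi0 : phi 0 = 0) (lam1 : dotv lam lam = 1).
Variables (ga : 'rV[R]_n) (gb : 'rV[R]_m).
Hypothesis valid : valid_ineq (epi_cone phi lam) (ga, gb) 0.

Lemma valid_epi_cone_parallel : ga = dotv ga lam *: lam.
Proof.
set c := dotv ga lam; set r := ga - c *: lam.
have lam_r : dotv lam r = 0 by rewrite dotvBr dotvZr lam1 mulr1 dotvC subrr.
have := @valid (r, 0).
rewrite /epi_cone /pdot /= phi0 lam_r dotv0r addr0 => /(_ (lexx _)).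
rewrite {1}(_ : ga = r + c *: lam); last by rewrite subrK.
by rewrite dotvDl dotvZl lam_r mulr0 addr0 => /dotvv_le0/eqP; rewrite subr_eq0 => /eqP.
Qed.

Lemma valid_epi_cone_coef_le0 : dotv ga lam <= 0.
Proof.
have := @valid (lam, 0).
by rewrite /epi_cone /pdot /= phi0 lam1 dotv0r addr0 => /(_ ler01).
Qed.

Lemma valid_epi_cone_minorant y : dotv gb y <= - dotv ga lam * phi y.
Proof.
have := @valid (phi y *: lam, y); rewrite /epi_cone /pdot /= !dotvZr lam1 mulr1.
by move=> /(_ (lexx _)) le0; lra.
Qed.

End ValidForEpiCone.
End Cones.

Theorem lemmaA2 (R : realType) (n m : nat) (phi : 'rV[R]_m -> R)
  (lam : 'rV[R]_n) (xb : 'rV[R]_n) (yb : 'rV[R]_m) :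
  sublinear phi ->
  enorm lam = 1 ->
  let C := [set z : 'rV[R]_n * 'rV[R]_m | phi z.2 <= dotv lam z.1] in
  C (xb, yb) ->
  differentiable phi yb ->
  phi yb = dotv lam xb ->
  exposes C (xb, yb) (- lam, grad phi yb) 0.
Proof.
move=> [_ hom] /enorm1_dotvv lam1 C Cb dphi tight.
have phi0 := pos_homogeneous0 hom.
split; first by rewrite /pdot /= dotvNl pos_homogeneous_euler // tight addNr.
move=> [ga gb] d nontriv val gtight.
have d0 := valid_cone_tight_rhs0 (epi_cone_is_cone lam hom) val Cb gtight.
rewrite {}d0 in val gtight *; set c := dotv ga lam.
have ga_eq : ga = c *: lam := valid_epi_cone_parallel phi0 lam1 val.
have minor := valid_epi_cone_minorant lam1 val.
have gb_yb : dotv gb yb = - c * phi yb.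
  by move: gtight; rewrite /pdot /= ga_eq dotvZl -tight => ?; lra.
have c_lt0 : c < 0.
  rewrite lt_neqAle (valid_epi_cone_coef_le0 phi0 lam1 val) andbT.
  apply: contra_notN nontriv => /eqP c0.
  have /dotvv_le0 -> : dotv gb gb <= 0 by have := minor gb; rewrite -/c c0 oppr0 mul0r.
  by rewrite ga_eq c0 scale0r.
have grad_eq : grad phi yb = (- c)^-1 *: gb.
  by apply: grad_subgradient => //; apply: scaled_minorant_subgradient; rewrite ?oppr_gt0.
exists (- c); split; first by rewrite oppr_gt0.
split; last by rewrite mulr0.
rewrite grad_eq scalerA mulfV ?oppr_eq0 ?lt_eqF // scale1r.
by rewrite ga_eq scaleNr scalerN opprK.
Qed.
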